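(* Let $\mathcal{C}$ be a deflation-exact category and let $\mathcal{A}$ be a non-empty full subcategory of $\mathcal{C}$ satisfying axiom (A3). Let $g\colon Y\to Z$ be a morphism which has a kernel belonging to $\mathcal{A}$, and suppose there exists a deflation $f\colon X\twoheadrightarrow Y$ such that $gf$ is also a deflation. Then $g$ is a deflation.
   Context: A conflation category is an additive category with a class of kernel-cokernel pairs (closed under isomorphisms) called conflations; first map an inflation, second a deflation. A deflation-exact category is a conflation category satisfying: (R0) $1_0$ is a deflation; (R1) composites of deflations are deflations; (R2) pullbacks of deflations along arbitrary morphisms exist and are deflations. Axiom (A3) for a full subcategory $\mathcal{A}$: if $a\colon C\rightarrowtail D$ is an inflation and $b\colon C\twoheadrightarrow A$ is a deflation with $A\in\mathcal{A}$, then the pushout of $a$ along $b$ exists and in the pushout square the map $D\to P$ is a deflation and $A\to P$ is an inflation. *)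

From HB Require Import structures.
From mathcomp Require Import all_boot all_algebra.
Set Implicit Arguments.
Unset Strict Implicit.
Unset Printing Implicit Defensive.
Import GRing.Theory.
Local Open Scope ring_scope.

Record AddCat := {
  Obj :> Type;
  Mor : Obj -> Obj -> zmodType;
  mcomp : forall X Y Z : Obj, Mor Y Z -> Mor X Y -> Mor X Z;
  idm : forall X : Obj, Mor X X;
  comp_assoc : forall (W X Y Z : Obj) (h : Mor Y Z) (g : Mor X Y) (f : Mor W X),
      mcomp h (mcomp g f) = mcomp (mcomp h g) f;
  comp_id_l : forall (X Y : Obj) (f : Mor X Y), mcomp (idm Y) f = f;
  comp_id_r : forall (X Y : Obj) (f : Mor X Y), mcomp f (idm X) = f;
  comp_addl : forall (X Y Z : Obj) (g1 g2 : Mor Y Z) (f : Mor X Y),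
      mcomp (g1 + g2) f = mcomp g1 f + mcomp g2 f;
  comp_addr : forall (X Y Z : Obj) (g : Mor Y Z) (f1 f2 : Mor X Y),
      mcomp g (f1 + f2) = mcomp g f1 + mcomp g f2;
  zobj : Obj;
  zobj_initial : forall (X : Obj) (f : Mor zobj X), f = 0;
  zobj_terminal : forall (X : Obj) (f : Mor X zobj), f = 0;
  biproducts : forall X Y : Obj, exists (B : Obj) (i1 : Mor X B) (i2 : Mor Y B)
      (p1 : Mor B X) (p2 : Mor B Y),
      [/\ mcomp p1 i1 = idm X, mcomp p2 i2 = idm Y, mcomp p1 i2 = 0,
          mcomp p2 i1 = 0 & mcomp i1 p1 + mcomp i2 p2 = idm B]
}.

Arguments mcomp {c X Y Z} g f : rename.
Arguments idm {c} X : rename.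
Arguments zobj {c} : rename.

Section Defs.
Variable C : AddCat.

Definition is_iso (X Y : C) (f : Mor X Y) : Prop :=
  exists g : Mor Y X, mcomp g f = idm X /\ mcomp f g = idm Y.

Definition is_kernel (K Y Z : C) (k : Mor K Y) (g : Mor Y Z) : Prop :=
  mcomp g k = 0 /\
  forall (W : C) (h : Mor W Y), mcomp g h = 0 ->
    exists u : Mor W K, mcomp k u = h /\ forall u' : Mor W K, mcomp k u' = h -> u' = u.

Definition is_cokernel (Y Z Q : C) (c : Mor Z Q) (f : Mor Y Z) : Prop :=
  mcomp c f = 0 /\
  forall (W : C) (h : Mor Z W), mcomp h f = 0 ->
    exists u : Mor Q W, mcomp u c = h /\ forall u' : Mor Q W, mcomp u' c = h -> u' = u.

Definition kernel_cokernel_pair (X Y Z : C) (i : Mor X Y) (p : Mor Y Z) : Prop :=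
  is_kernel i p /\ is_cokernel p i.

Definition is_pullback (A B D P : C) (p : Mor B D) (f : Mor A D)
    (f' : Mor P B) (p' : Mor P A) : Prop :=
  mcomp f p' = mcomp p f' /\
  forall (W : C) (a : Mor W A) (b : Mor W B), mcomp f a = mcomp p b ->
    exists u : Mor W P, (mcomp p' u = a /\ mcomp f' u = b) /\
      forall u' : Mor W P, mcomp p' u' = a -> mcomp f' u' = b -> u' = u.

Definition is_pushout (E D A P : C) (a : Mor E D) (b : Mor E A)
    (a' : Mor D P) (b' : Mor A P) : Prop :=
  mcomp a' a = mcomp b' b /\
  forall (W : C) (x : Mor D W) (y : Mor A W), mcomp x a = mcomp y b ->
    exists u : Mor P W, (mcomp u a' = x /\ mcomp u b' = y) /\
      forall u' : Mor P W, mcomp u' a' = x -> mcomp u' b' = y -> u' = u.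

End Defs.

Definition ConflClass (C : AddCat) :=
  forall X Y Z : C, Mor X Y -> Mor Y Z -> Prop.

Definition is_conflation_category (C : AddCat) (E : ConflClass C) : Prop :=
  (forall (X Y Z : C) (i : Mor X Y) (p : Mor Y Z), E X Y Z i p ->
      kernel_cokernel_pair i p) /\
  (forall (X Y Z X' Y' Z' : C) (i : Mor X Y) (p : Mor Y Z)
          (i' : Mor X' Y') (p' : Mor Y' Z')
          (a : Mor X' X) (b : Mor Y' Y) (c : Mor Z' Z),
      E X Y Z i p -> is_iso a -> is_iso b -> is_iso c ->
      mcomp b i' = mcomp i a -> mcomp c p' = mcomp p b ->
      E X' Y' Z' i' p').

Definition inflation (C : AddCat) (E : ConflClass C) (X Y : C) (i : Mor X Y) : Prop :=
  exists (Z : C) (p : Mor Y Z), E X Y Z i p.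

Definition deflation (C : AddCat) (E : ConflClass C) (Y Z : C) (p : Mor Y Z) : Prop :=
  exists (X : C) (i : Mor X Y), E X Y Z i p.

Definition is_deflation_exact (C : AddCat) (E : ConflClass C) : Prop :=
  [/\ is_conflation_category E,
      deflation E (idm (@zobj C)),
      (forall (X Y Z : C) (p : Mor X Y) (q : Mor Y Z),
                  deflation E p -> deflation E q -> deflation E (mcomp q p)) &
      (forall (A B D : C) (p : Mor B D) (f : Mor A D), deflation E p ->
                  exists (P : C) (f' : Mor P B) (p' : Mor P A),
                    is_pullback p f f' p' /\ deflation E p')].

Definition axiom_A3 (C : AddCat) (E : ConflClass C) (AA : C -> Prop) : Prop :=
  forall (E0 D A : C) (a : Mor E0 D) (b : Mor E0 A),
    inflation E a -> deflation E b -> AA A ->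
    exists (P : C) (a' : Mor D P) (b' : Mor A P),
      is_pushout a b a' b' /\ deflation E a' /\ inflation E b'.

From mathcomp Require Import all_boot all_algebra.
Set Implicit Arguments.
Unset Strict Implicit.
Unset Printing Implicit Defensive.
Import GRing.Theory.
Local Open Scope ring_scope.

(* The pullback p' : P0 ->> K of f along k is a deflation, and its other leg
   f' : P0 -> X is a kernel of gf, hence an inflation.  By (A3) the pushout of
   f' along p' exists, with a deflation a' : X ->> P and an inflation
   b' : K >-> P whose cokernel s : P -> Z is induced by gf.  The comparison map
   t : P -> Y is monic on b', and both s and t kill a' composed with the kernel
   of f; hence a' factors through f as r : Y -> P, an inverse of t, and r
   carries (k, g) onto the conflation (b', s). *)

Section AdditiveCategory.
Variable C : AddCat.

Definition is_mono (X Y : C) (m : Mor X Y) : Prop :=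
  forall (W : C) (x y : Mor W X), mcomp m x = mcomp m y -> x = y.

Definition is_epi (X Y : C) (e : Mor X Y) : Prop :=
  forall (W : C) (x y : Mor Y W), mcomp x e = mcomp y e -> x = y.

Lemma comp0l (X Y Z : C) (f : Mor X Y) : mcomp (0 : Mor Y Z) f = 0.
Proof.
have e := comp_addl (0 : Mor Y Z) 0 f; rewrite addr0 in e.
by apply: (addrI (mcomp (0 : Mor Y Z) f)); rewrite addr0 -e.
Qed.

Lemma comp0r (X Y Z : C) (g : Mor Y Z) : mcomp g (0 : Mor X Y) = 0.
Proof.
have e := comp_addr g (0 : Mor X Y) 0; rewrite addr0 in e.
by apply: (addrI (mcomp g (0 : Mor X Y))); rewrite addr0 -e.
Qed.

Lemma is_iso_idm (X : C) : is_iso (idm X).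
Proof. by exists (idm X); rewrite comp_id_l. Qed.

Lemma kernel_mono (K Y Z : C) (k : Mor K Y) (g : Mor Y Z) :
  is_kernel k g -> is_mono k.
Proof.
move=> [gk kerP] W x y kxy.
have [u [_ uniq_u]] := kerP W (mcomp k x) (ltac:(by rewrite comp_assoc gk comp0l)).
by rewrite (uniq_u x erefl) (uniq_u y (esym kxy)).
Qed.

Lemma cokernel_epi (Y Z Q : C) (c : Mor Z Q) (f : Mor Y Z) :
  is_cokernel c f -> is_epi c.
Proof.
move=> [cf cokP] W x y xcy.
have [u [_ uniq_u]] := cokP W (mcomp x c) (ltac:(by rewrite -comp_assoc cf comp0r)).
by rewrite (uniq_u x erefl) (uniq_u y (esym xcy)).
Qed.

Lemma kernel_iso (K K' Y Z : C) (k : Mor K Y) (k' : Mor K' Y) (g : Mor Y Z) :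
  is_kernel k g -> is_kernel k' g ->
  exists a : Mor K' K, is_iso a /\ mcomp k a = k'.
Proof.
move=> kk kk'.
have [a [ka _]] := kk.2 K' k' kk'.1.
have [a' [ka' _]] := kk'.2 K k kk.1.
exists a; split=> //; exists a'; split.
- by apply: (kernel_mono kk'); rewrite comp_assoc ka' ka comp_id_r.
- by apply: (kernel_mono kk); rewrite comp_assoc ka ka' comp_id_r.
Qed.

Lemma cokernel_iso (X Y Q Q' : C) (c : Mor Y Q) (c' : Mor Y Q') (f : Mor X Y) :
  is_cokernel c f -> is_cokernel c' f ->
  exists a : Mor Q' Q, is_iso a /\ mcomp a c' = c.
Proof.
move=> cc cc'.
have [a [ac _]] := cc'.2 Q c cc.1.
have [a' [ac' _]] := cc.2 Q' c' cc'.1.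
exists a; split=> //; exists a'; split.
- by apply: (cokernel_epi cc'); rewrite -comp_assoc ac ac' comp_id_l.
- by apply: (cokernel_epi cc); rewrite -comp_assoc ac' ac comp_id_l.
Qed.

Lemma pullback_kernel (X Y Z K P : C) (f : Mor X Y) (g : Mor Y Z) (k : Mor K Y)
    (f' : Mor P X) (p' : Mor P K) :
  is_kernel k g -> is_pullback f k f' p' -> is_kernel f' (mcomp g f).
Proof.
move=> kk [sq pbP]; split; first by rewrite -comp_assoc -sq comp_assoc kk.1 comp0l.
move=> W w gfw.
have [b [kb _]] := kk.2 W (mcomp f w) (ltac:(by rewrite comp_assoc)).
have [u [[p'u f'u] uniq_u]] := pbP W b w kb.
exists u; split=> // u' f'u'; apply: uniq_u => //.
by apply: (kernel_mono kk); rewrite kb comp_assoc sq -comp_assoc f'u'.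
Qed.

Lemma pushout_cokernel (E0 D A P Q : C) (a : Mor E0 D) (b : Mor E0 A)
    (a' : Mor D P) (b' : Mor A P) (c : Mor D Q) (s : Mor P Q) :
  is_pushout a b a' b' -> is_cokernel c a ->
  mcomp s a' = c -> mcomp s b' = 0 -> is_cokernel s b'.
Proof.
move=> [sq poP] cc sa' sb'; split=> // W w wb'.
have wa'a : mcomp (mcomp w a') a = 0 by rewrite -comp_assoc sq comp_assoc wb' comp0l.
have [v [vc uniq_v]] := cc.2 W (mcomp w a') wa'a.
have [u [_ uniq_u]] := poP W (mcomp w a') 0 (ltac:(by rewrite comp0l)).
exists v; split.
- rewrite (uniq_u w erefl wb') (uniq_u (mcomp v s)) //.
  + by rewrite -comp_assoc sa'.
  + by rewrite -comp_assoc sb' comp0r.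
- by move=> v' v's; apply: uniq_v; rewrite -sa' comp_assoc v's.
Qed.

Lemma eq0_of_kernel_mono (W A P Q Y : C) (b' : Mor A P) (s : Mor P Q)
    (t : Mor P Y) (x : Mor W P) :
  is_kernel b' s -> is_mono (mcomp t b') ->
  mcomp s x = 0 -> mcomp t x = 0 -> x = 0.
Proof.
move=> kb' tb'_mono sx tx.
have [z [b'z _]] := kb'.2 W x sx.
have z0 : z = 0 by apply: tb'_mono; rewrite comp0r -comp_assoc b'z.
by rewrite -b'z z0 comp0r.
Qed.

Lemma pushout_comparison_iso (W X Y K P0 P : C) (i : Mor W X) (f : Mor X Y)
    (k : Mor K Y) (f' : Mor P0 X) (p' : Mor P0 K) (a' : Mor X P) (b' : Mor K P)
    (t : Mor P Y) :
  is_pushout f' p' a' b' -> is_cokernel f i -> is_epi p' ->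
  mcomp t a' = f -> mcomp t b' = k -> mcomp a' i = 0 ->
  exists r : Mor Y P, [/\ is_iso r, mcomp r f = a' & mcomp r k = b'].
Proof.
move=> [sq poP] cf p'_epi ta' tb' a'i.
have [r [rf _]] := cf.2 P a' a'i.
have rk : mcomp r k = b'.
  apply: p'_epi.
  by rewrite -comp_assoc -tb' -comp_assoc -sq [mcomp t _]comp_assoc ta' comp_assoc rf.
exists r; split=> //; exists t; split.
- by apply: (cokernel_epi cf); rewrite -comp_assoc rf ta' comp_id_l.
- have [u [_ uniq_u]] := poP P a' b' sq.
  rewrite (uniq_u (idm P)) ?comp_id_l // (uniq_u (mcomp r t)) //.
  + by rewrite -comp_assoc ta'.
  + by rewrite -comp_assoc tb'.
Qed.

End AdditiveCategory.

Section ConflationCategory.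
Variables (C : AddCat) (E : ConflClass C).
Arguments E : clear implicits.
Hypothesis hE : is_conflation_category E.

Lemma conflation_of_kernel (X X' Y Z : C) (i : Mor X Y) (i' : Mor X' Y) (p : Mor Y Z) :
  E X Y Z i p -> is_kernel i' p -> E X' Y Z i' p.
Proof.
move=> Eip ki'.
have [a [a_iso ia]] := kernel_iso (hE.1 _ _ _ _ _ Eip).1 ki'.
apply: (hE.2 _ _ _ _ _ _ i p i' p a (idm Y) (idm Z) Eip a_iso) => //.
- exact: is_iso_idm.
- exact: is_iso_idm.
- by rewrite comp_id_l ia.
- by rewrite comp_id_l comp_id_r.
Qed.

Lemma conflation_of_cokernel (X Y Z Z' : C) (i : Mor X Y) (p : Mor Y Z) (p' : Mor Y Z') :
  E X Y Z i p -> is_cokernel p' i -> E X Y Z' i p'.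
Proof.
move=> Eip cp'.
have [c [c_iso cp]] := cokernel_iso (hE.1 _ _ _ _ _ Eip).2 cp'.
apply: (hE.2 _ _ _ _ _ _ i p i p' (idm X) (idm Y) c Eip) => //.
- exact: is_iso_idm.
- exact: is_iso_idm.
- by rewrite comp_id_l comp_id_r.
- by rewrite comp_id_r.
Qed.

Lemma conflation_of_iso (X Y Y' Z : C) (i : Mor X Y) (p : Mor Y Z)
    (i' : Mor X Y') (p' : Mor Y' Z) (r : Mor Y' Y) :
  E X Y Z i p -> is_iso r -> mcomp r i' = i -> mcomp p r = p' -> E X Y' Z i' p'.
Proof.
move=> Eip r_iso ri' pr.
apply: (hE.2 _ _ _ _ _ _ i p i' p' (idm X) r (idm Z) Eip) => //.
- exact: is_iso_idm.
- exact: is_iso_idm.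
- by rewrite ri' comp_id_r.
- by rewrite comp_id_l pr.
Qed.

End ConflationCategory.

Theorem mainTheorem5 (C : AddCat) (E : ConflClass C) (AA : C -> Prop)
  (hC : is_deflation_exact E)
  (hne : exists X : C, AA X)
  (hA3 : axiom_A3 E AA)
  (Y Z : C) (g : Mor Y Z)
  (hker : exists (K : C) (k : Mor K Y), is_kernel k g /\ AA K)
  (hf : exists (X : C) (f : Mor X Y), deflation E f /\ deflation E (mcomp g f)) :
  deflation E g.
Proof.
case: hC => hE _ _ R2.
have [K [k [kk AK]]] := hker.
have [X [f [[W [i Ei]] [L [h Eh]]]]] := hf.
have [ki cf] := hE.1 _ _ _ _ _ Ei.
have [P0 [f' [p' [pb [V [j Ej]]]]]] := R2 _ _ _ f k (ltac:(by exists W, i)).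
have Ef' := conflation_of_kernel hE Eh (pullback_kernel kk pb).
have [P [a' [b' [po [_ [Q [c Ec]]]]]]] :=
  hA3 _ _ _ f' p' (ltac:(by exists Z, (mcomp g f))) (ltac:(by exists V, j)) AK.
have [t [[ta' tb'] _]] := po.2 Y f k (esym pb.1).
have cgf := (hE.1 _ _ _ _ _ Ef').2.
have [s [[sa' sb'] _]] := po.2 Z (mcomp g f) 0 (ltac:(by rewrite comp0l; exact: cgf.1)).
have Es := conflation_of_cokernel hE Ec (pushout_cokernel po cgf sa' sb').
have a'i : mcomp a' i = 0.
  apply: (eq0_of_kernel_mono (hE.1 _ _ _ _ _ Es).1 (t := t)).
  - by rewrite tb'; exact: kernel_mono kk.
  - by rewrite comp_assoc sa' -comp_assoc ki.1 comp0r.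
  - by rewrite comp_assoc ta' ki.1.
have p'_epi := cokernel_epi (hE.1 _ _ _ _ _ Ej).2.
have [r [r_iso rf rk]] := pushout_comparison_iso po cf p'_epi ta' tb' a'i.
have sr : mcomp s r = g by apply: (cokernel_epi cf); rewrite -comp_assoc rf sa'.
by exists K, k; exact: (conflation_of_iso hE Es r_iso rk sr).
Qed.
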